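(* Let $\pi:A^\infty\to LA^\infty$ be defined by $\pi(\varepsilon)=*$ and $\pi(aw)=(a,w)$ for $a\in A$, $w\in A^\infty$. Then $\pi$ is measurable and $(A^\infty,\pi)$ is a final $L$-coalgebra in $\mathbf{Meas}$: for every measurable $\gamma:X\to LX$ there is a unique measurable $\varphi:X\to A^\infty$ with $\pi\circ\varphi=L\varphi\circ\gamma$.
   Context: $A$ is a finite alphabet, $A^*$ finite words (empty word $\varepsilon$), $A^\omega$ infinite words, $A^\infty=A^*\cup A^\omega$, $wS=\{wv\mid v\in S\}$. $\Sigma_{A^\infty}$ is the $\sigma$-algebra generated by $S_\infty=\{\emptyset\}\cup\{\{w\}\mid w\in A^*\}\cup\{wA^\infty\mid w\in A^*\}$. Work in $\mathbf{Meas}$; $1=\{*\}$; the functor $L$ is $LX=A\times X+1$ with $\sigma$-algebra $(\mathcal P(A)\otimes\Sigma_X)\oplus\mathcal P(1)$ (the sum $\sigma$-algebra on a disjoint union consists of the disjoint unions of measurable pieces), and $Lf=\mathrm{id}_A\times f+\mathrm{id}_1$. *)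

From mathcomp Require Import all_boot.
From Stdlib Require Import List.

Set Implicit Arguments.
Unset Strict Implicit.
Unset Printing Implicit Defensive.

Definition pset (T : Type) := T -> Prop.

Definition is_sigma (T : Type) (S : pset T -> Prop) : Prop :=
  S (fun _ => False) /\
  (forall E, S E -> S (fun x => ~ E x)) /\
  (forall F : nat -> pset T, (forall n, S (F n)) -> S (fun x => exists n, F n x)).

Definition gen_sigma (T : Type) (G : pset T -> Prop) : pset T -> Prop :=
  fun E => forall S, is_sigma S -> (forall B, G B -> S B) -> S E.

Definition measurable_fun (X Y : Type) (SX : pset X -> Prop) (SY : pset Y -> Prop)
  (f : X -> Y) : Prop :=
  forall E, SY E -> SX (fun x => E (f x)).

(* A word is a sequence nat -> option A which, once undefined (None), stays
   undefined: finite words are those that eventually hit None, infinite ones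
   never do. *)
Definition word (A : Type) :=
  {w : nat -> option A | forall n, w n = None -> w (S n) = None}.

Definition wat (A : Type) (w : word A) (n : nat) : option A := proj1_sig w n.

Lemma of_list_prop (A : Type) (l : list A) :
  forall n, nth_error l n = None -> nth_error l (S n) = None.
Proof.
  move=> n /nth_error_None H; apply/nth_error_None.
  apply: le_S; exact: H.
Qed.

Definition of_list (A : Type) (l : list A) : word A :=
  exist _ (fun n => nth_error l n) (@of_list_prop A l).

(* v belongs to the cylinder l A^infty, i.e. l is a prefix of v. *)
Definition has_prefix (A : Type) (l : list A) (v : word A) : Prop :=
  forall n, n < length l -> wat v n = nth_error l n.

Definition S_inf (A : Type) : pset (word A) -> Prop :=
  fun E =>
    E = (fun _ => False) \/
    (exists l : list A, E = (fun v => v = of_list l)) \/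
    (exists l : list A, E = (fun v => has_prefix l v)).

Definition Ainf_sigma (A : Type) : pset (word A) -> Prop := gen_sigma (@S_inf A).

Definition L (A X : Type) := (A * X + unit)%type.

Definition prod_sigma (A X : Type) (SX : pset X -> Prop) : pset (A * X) -> Prop :=
  gen_sigma (fun R => exists (B : pset A) (C : pset X),
                 SX C /\ R = (fun p => B p.1 /\ C p.2)).

Arguments prod_sigma A {X} SX _.

(* (P(A) (x) Sigma_X) (+) P(1): a set is measurable iff its A x X part is
   measurable (every subset of 1 is measurable). *)
Definition L_sigma (A X : Type) (SX : pset X -> Prop) : pset (L A X) -> Prop :=
  fun E => prod_sigma A SX (fun p => E (inl p)).

Arguments L_sigma A {X} SX _.

Definition Lmap (A X Y : Type) (f : X -> Y) (u : L A X) : L A Y :=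
  match u with
  | inl (a, x) => inl (a, f x)
  | inr t => inr t
  end.

Lemma tail_prop (A : Type) (w : word A) :
  forall n, wat w (S n) = None -> wat w (S (S n)) = None.
Proof. move=> n; exact: (proj2_sig w (S n)). Qed.

Definition wtail (A : Type) (w : word A) : word A :=
  exist _ (fun n => wat w (S n)) (@tail_prop A w).

Definition piw (A : Type) (w : word A) : L A (word A) :=
  match wat w 0 with
  | None => inr tt
  | Some a => inl (a, wtail w)
  end.

(* A^oo carries the sigma-algebra generated by points and cylinders; each generator is a
   countable intersection of coordinate conditions [wat w n = o], so a map into A^oo is
   measurable as soon as its coordinates are.  The preimage of a set under pi splits
   according to the first letter, and (A being finite) this is a finite union of cylinders
   [a A^oo] intersected with preimages under the tail map.  The unique coalgebra morphism
   from gamma sends x to the word of labels met while iterating gamma from x; its n-th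
   letter is forced by the homomorphism equation, and is measurable by induction on n. *)
From mathcomp Require Import all_boot.
From Stdlib Require Import List Classical FunctionalExtensionality PropExtensionality ProofIrrelevance.

Set Implicit Arguments.
Unset Strict Implicit.
Unset Printing Implicit Defensive.

Lemma pset_ext (T : Type) (E E' : pset T) : (forall x, E x <-> E' x) -> E = E'.
Proof.
by move=> H; apply: functional_extensionality => x; apply: propositional_extensionality.
Qed.

Lemma sigma_ext (T : Type) (S : pset T -> Prop) (E E' : pset T) :
  S E -> (forall x, E x <-> E' x) -> S E'.
Proof. by move=> HE /pset_ext <-. Qed.

Section SigmaAlgebra.
Variables (T : Type) (S : pset T -> Prop).
Hypothesis HS : is_sigma S.

Lemma sigma0 : S (fun _ => False). Proof. by case: HS. Qed.

Lemma sigmaC (E : pset T) : S E -> S (fun x => ~ E x).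
Proof. by case: HS => _ [HC _]; apply: HC. Qed.

Lemma sigma_bigcup (F : nat -> pset T) : (forall n, S (F n)) -> S (fun x => exists n, F n x).
Proof. by case: HS => _ [_ HU]; apply: HU. Qed.

Lemma sigma_const (P : Prop) : S (fun _ => P).
Proof.
case: (classic P) => HP; last by apply: sigma_ext sigma0 _ => x; tauto.
by apply: sigma_ext (sigmaC sigma0) _ => x; tauto.
Qed.

Lemma sigma_bigcap (F : nat -> pset T) : (forall n, S (F n)) -> S (fun x => forall n, F n x).
Proof.
move=> HF; apply: sigma_ext (sigmaC (sigma_bigcup (fun n => sigmaC (HF n)))) _ => x.
by split=> [Hn n | Hn [n]]; [apply: NNPP => Hc; apply: Hn; exists n | apply; apply: Hn].
Qed.

Lemma sigmaU (E1 E2 : pset T) : S E1 -> S E2 -> S (fun x => E1 x \/ E2 x).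
Proof.
move=> H1 H2; apply: sigma_ext (@sigma_bigcup (fun n => if n is 0 then E1 else E2) _) _.
  by case.
by move=> x; split=> [[[|n]] | [] ?]; [left | right | exists 0 | exists 1].
Qed.

Lemma sigmaI (E1 E2 : pset T) : S E1 -> S E2 -> S (fun x => E1 x /\ E2 x).
Proof.
move=> H1 H2; apply: sigma_ext (@sigma_bigcap (fun n => if n is 0 then E1 else E2) _) _.
  by case.
by move=> x; split=> [H | [? ?] [|n]] //; split; [apply: (H 0) | apply: (H 1)].
Qed.

Lemma sigma_bigcup_count (I : countType) (F : I -> pset T) :
  (forall i, S (F i)) -> S (fun x => exists i, F i x).
Proof.
move=> HF.
pose G n := if unpickle n is Some i then F i else fun _ => False.
apply: sigma_ext (@sigma_bigcup G _) _ => [n | x].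
  by rewrite /G; case: (unpickle n) => [i|]; [apply: HF | apply: sigma0].
split=> [[n] | [i Fi]]; first by rewrite /G; case: (unpickle n) => [i|] //; exists i.
by exists (pickle i); rewrite /G pickleK.
Qed.

End SigmaAlgebra.

Lemma gen_sigma_is_sigma (T : Type) (G : pset T -> Prop) : is_sigma (gen_sigma G).
Proof.
split; [|split].
- by move=> S HS _; apply: sigma0.
- by move=> E HE S HS HG; apply: sigmaC => //; apply: HE.
- by move=> F HF S HS HG; apply: sigma_bigcup => // n; apply: HF.
Qed.

Lemma gen_sigma_sub (T : Type) (G : pset T -> Prop) (B : pset T) : G B -> gen_sigma G B.
Proof. by move=> GB S _; apply. Qed.

(* Inside a measurable set D, the sets whose f-preimage is measurable form a
   sigma-algebra (complements are taken relative to D). *)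
Lemma gen_sigma_preimage_on (T U : Type) (S : pset T -> Prop) (G : pset U -> Prop)
    (D : pset T) (f : T -> U) :
  is_sigma S -> S D -> (forall B, G B -> S (fun x => D x /\ B (f x))) ->
  forall E, gen_sigma G E -> S (fun x => D x /\ E (f x)).
Proof.
move=> HS HD HG E HE; apply: (HE (fun E => S (fun x => D x /\ E (f x)))) => [|B /HG //].
split; [|split].
- by apply: sigma_ext (sigma0 HS) _ => x; tauto.
- move=> E' HE'; apply: sigma_ext (sigmaI HS HD (sigmaC HS HE')) _ => x; tauto.
- move=> F HF; apply: sigma_ext (sigma_bigcup HS HF) _ => x; firstorder.
Qed.

Lemma measurable_fun_gen (T U : Type) (S : pset T -> Prop) (G : pset U -> Prop) (f : T -> U) :
  is_sigma S -> (forall B, G B -> S (fun x => B (f x))) -> measurable_fun S (gen_sigma G) f.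
Proof.
move=> HS HG E HE.
have HGT B : G B -> S (fun x => True /\ B (f x)).
  by move=> GB; apply: sigma_ext (HG B GB) _ => x; tauto.
have := gen_sigma_preimage_on HS (sigma_const HS True) HGT HE.
by move/sigma_ext; apply=> x; tauto.
Qed.

Lemma prod_sigma_section (A X : Type) (SX : pset X -> Prop) (R : pset (A * X)) (a : A) :
  is_sigma SX -> prod_sigma A SX R -> SX (fun x => R (a, x)).
Proof.
move=> HS; apply: (measurable_fun_gen (f := pair a) HS) => _ [B [C [HC ->]]] /=.
exact (sigmaI HS (sigma_const HS (B a)) HC).
Qed.

Section Words.
Variable A : Type.
Implicit Types (v w : word A) (l : list A).

Lemma word_ext v w : (forall n, wat v n = wat w n) -> v = w.
Proof.
case: v w => f Hf [g Hg]; rewrite /wat /= => H.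
have e : f = g by apply: functional_extensionality.
by subst g; f_equal; apply: proof_irrelevance.
Qed.

Lemma wat_none w : wat w 0 = None -> forall n, wat w n = None.
Proof. by move=> H; elim=> [|n IH] //; apply: (proj2_sig w n IH). Qed.

Lemma eq_nil w : w = of_list nil <-> wat w 0 = None.
Proof.
split=> [-> // | H]; apply: word_ext => n.
by rewrite (wat_none H); case: n.
Qed.

Lemma Ainf_sigma_is_sigma : is_sigma (@Ainf_sigma A).
Proof. exact: gen_sigma_is_sigma. Qed.

Lemma Ainf_point l : Ainf_sigma (fun v => v = of_list l).
Proof. by apply: gen_sigma_sub; right; left; exists l. Qed.

Lemma Ainf_cylinder l : Ainf_sigma (has_prefix l).
Proof. by apply: gen_sigma_sub; right; right; exists l. Qed.

Lemma Ainf_nil : Ainf_sigma (fun w => wat w 0 = None).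
Proof. by apply: sigma_ext (Ainf_point nil) _ => w; rewrite eq_nil. Qed.

Lemma Ainf_head (a : A) : Ainf_sigma (fun w => wat w 0 = Some a).
Proof.
apply: sigma_ext (Ainf_cylinder [:: a]) _ => w.
by split=> [H | H [|n] //]; apply: (H 0).
Qed.

Lemma Ainf_cons (a : A) (C : pset (word A)) :
  Ainf_sigma C -> Ainf_sigma (fun w => wat w 0 = Some a /\ C (wtail w)).
Proof.
apply: (gen_sigma_preimage_on Ainf_sigma_is_sigma (Ainf_head a)).
move=> _ [-> | [[l ->] | [l ->]]].
- by apply: sigma_ext (sigma0 Ainf_sigma_is_sigma) _ => w; tauto.
- apply: sigma_ext (Ainf_point (a :: l)) _ => w; split=> [-> | [H0 Ht]].
    by split => //; apply: word_ext.
  apply: word_ext => -[|n] //=.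
  by rewrite -[wat w n.+1]/(wat (wtail w) n) Ht.
- apply: sigma_ext (Ainf_cylinder (a :: l)) _ => w; split=> [H | [H0 Ht] [|n] Hn //].
    by split=> [|n Hn]; [apply: (H 0) | apply: (H n.+1)].
  exact: Ht.
Qed.

Lemma measurable_word_fun (X : Type) (SX : pset X -> Prop) (phi : X -> word A) :
  is_sigma SX -> (forall n o, SX (fun x => wat (phi x) n = o)) ->
  measurable_fun SX (@Ainf_sigma A) phi.
Proof.
move=> HS Hcoord; apply: (measurable_fun_gen HS) => _ [-> | [[l ->] | [l ->]]].
- exact: sigma0 HS.
- apply: sigma_ext (sigma_bigcap HS (fun n => Hcoord n (nth_error l n))) _ => x.
  by split=> [H | -> n //]; apply: word_ext.
- apply: (sigma_bigcap HS) => n; case: (n < length l).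
    by apply: sigma_ext (Hcoord n (nth_error l n)) _ => x; split=> // H; apply: H.
  by apply: sigma_ext (sigma_const HS True) _ => x.
Qed.

End Words.

Lemma piw_measurable (A : finType) :
  measurable_fun (@Ainf_sigma A) (L_sigma A (@Ainf_sigma A)) (@piw A).
Proof.
move=> E HE; have HS := @Ainf_sigma_is_sigma A.
have Hcons : Ainf_sigma (fun w => exists a, wat w 0 = Some a /\ E (inl (a, wtail w))).
  exact (sigma_bigcup_count HS (fun a => Ainf_cons a (prod_sigma_section a HS HE))).
apply: sigma_ext (sigmaU HS Hcons (sigmaI HS (@Ainf_nil A) (sigma_const HS (E (inr tt))))) _.
move=> w; rewrite /piw; case: (wat w 0) => [a|]; last by case: tt; firstorder.
by split=> [[[b [[<-]]] | []] | ?] //; left; exists a.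
Qed.

Section Unfold.
Variables (A : Type) (X : Type) (g : X -> L A X).

Fixpoint unfold_at (n : nat) (x : X) : option A :=
  match g x with
  | inl (a, x') => if n is m.+1 then unfold_at m x' else Some a
  | inr _ => None
  end.

Lemma unfold_at_none n x : unfold_at n x = None -> unfold_at n.+1 x = None.
Proof. by elim: n x => [|n IH] x /=; case: (g x) => [[a x']|] //=; apply: IH. Qed.

Definition unfold (x : X) : word A :=
  exist (fun w => forall n, w n = None -> w n.+1 = None) (unfold_at^~ x) (unfold_at_none^~ x).

Lemma piw_unfold x : piw (unfold x) = Lmap unfold (g x).
Proof.
rewrite /piw /wat /=; case e: (g x) => [[a x']|[]] //=.
by congr (inl (a, _)); apply: word_ext => n; rewrite /wat /= e.
Qed.

Lemma unfold_unique (psi : X -> word A) :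
  (forall x, piw (psi x) = Lmap psi (g x)) -> psi = unfold.
Proof.
move=> Hpsi; apply: functional_extensionality => x; apply: word_ext => n.
elim: n x => [|n IH] x; move: (Hpsi x); rewrite /piw /wat /=;
  case e: (proj1_sig (psi x) 0) => [b|]; case: (g x) => [[a x']|[]] //=.
- by case=> ->.
- by case=> _ Ht; have := IH x'; rewrite -Ht; apply.
- by move=> _; apply: (wat_none e n.+1).
Qed.

Variable SX : pset X -> Prop.
Hypotheses (HS : is_sigma SX) (Hg : measurable_fun SX (L_sigma A SX) g).

Lemma unfold_at_measurable n o : SX (fun x => unfold_at n x = o).
Proof.
elim: n o => [|n IH] o.
- pose E (u : L A X) := if u is inl p then Some p.1 = o else None = o.
  have HE : L_sigma A SX E.
    apply: gen_sigma_sub; exists (fun a => Some a = o), (fun _ => True).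
    by split; [apply: sigma_const | apply: pset_ext => p /=; tauto].
  by apply: sigma_ext (Hg HE) _ => x /=; case: (g x) => [[]|].
- pose E (u : L A X) := if u is inl p then unfold_at n p.2 = o else None = o.
  have HE : L_sigma A SX E.
    apply: gen_sigma_sub; exists (fun _ => True), (fun y => unfold_at n y = o).
    by split; [apply: IH | apply: pset_ext => p /=; tauto].
  by apply: sigma_ext (Hg HE) _ => x /=; case: (g x) => [[]|].
Qed.

Lemma unfold_measurable : measurable_fun SX (@Ainf_sigma A) unfold.
Proof. exact (measurable_word_fun (phi := unfold) HS unfold_at_measurable). Qed.

End Unfold.

Theorem mainTheorem8 (A : finType) :
  measurable_fun (@Ainf_sigma A) (L_sigma A (@Ainf_sigma A)) (@piw A) /\
  (forall (X : Type) (SX : pset X -> Prop), is_sigma SX ->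
   forall gamma : X -> L A X, measurable_fun SX (L_sigma A SX) gamma ->
   exists! phi : X -> word A,
     measurable_fun SX (@Ainf_sigma A) phi /\
     (forall x, piw (phi x) = Lmap phi (gamma x))).
Proof.
split; first exact: piw_measurable.
move=> X SX HS gamma Hgamma; exists (unfold gamma).
split; first by split; [apply: unfold_measurable | apply: piw_unfold].
by move=> psi [_ Hpsi]; apply/esym/unfold_unique.
Qed.
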